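(* Let $k\geq 1$. (i) Let $q$ be a prime power and $E\subset\mathbb{F}_q^2$. Then $E^{k+1}$ contains $\lesssim q^k|E|$ bad tuples. In particular, if $|E|\gtrsim q^{1+\varepsilon}$ for some constant $\varepsilon>0$, the number of bad tuples in $E^{k+1}$ is $o(|E|^{k+1})$. (ii) Let $p$ be a prime, $\ell\geq 1$, $R=\mathbb{Z}/p^\ell\mathbb{Z}$. The number of bad tuples in $(R^2)^{k+1}$ is $\lesssim p^{(2\ell-1)(k+1)+1}$. In particular, if $E\subset R^2$ satisfies $|E|\gtrsim p^{2\ell-1+\frac{1}{k+1}+\varepsilon}$ for some constant $\varepsilon>0$, then the number of bad tuples in $E^{k+1}$ is $o(|E|^{k+1})$.
   Context: For a commutative ring $R$ and $x=(x_1,x_2),y=(y_1,y_2)\in R^2$, write $y^\perp=(y_2,-y_1)$, so $x\cdot y^\perp=x_1y_2-x_2y_1$. A tuple (configuration) $x=(x^1,\dots,x^{k+1})\in(R^2)^{k+1}$ is good if there exist indices $i,j$ with $x^i\cdot x^{j\perp}$ a unit of $R$, and bad otherwise. $X\lesssim Y$ means $X\leq CY$ with $C$ independent of $q$ (resp. $p,\ell$) and $E$; $o(Y)$ denotes a quantity whose ratio to $Y$ tends to $0$ as the ring size tends to infinity. *)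

From Stdlib Require Import Reals.
From HB Require Import structures.
From mathcomp Require Import all_boot all_order all_algebra.
Set Implicit Arguments. Unset Strict Implicit. Unset Printing Implicit Defensive.
Import GRing.Theory.

Local Open Scope ring_scope.

Definition dotperp (R : comUnitRingType) (x y : R * R) : R :=
  x.1 * y.2 - x.2 * y.1.

Definition good (R : comUnitRingType) (k : nat) (x : 'I_k.+1 -> R * R) : Prop :=
  exists i j : 'I_k.+1, dotperp (x i) (x j) \is a GRing.unit.

Definition goodb (R : finComUnitRingType) (k : nat) (x : {ffun 'I_k.+1 -> R * R}) : bool :=
  [exists i : 'I_k.+1, exists j : 'I_k.+1, dotperp (x i) (x j) \is a GRing.unit].

Lemma goodbP (R : finComUnitRingType) (k : nat) (x : {ffun 'I_k.+1 -> R * R}) :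
  reflect (good x) (goodb x).
Proof.
apply: (iffP existsP) => [[i /existsP [j h]]|[i [j h]]]; first by exists i, j.
by exists i; apply/existsP; exists j.
Qed.

Definition nbad (R : finComUnitRingType) (k : nat) (E : {set R * R}) : nat :=
  #|[set x : {ffun 'I_k.+1 -> R * R} | [forall i, x i \in E] && ~~ goodb x]|.

(* Over a field a configuration is bad iff all x^i . x^j^perp vanish, i.e. all
   x^i lie on one line through the origin; such a tuple is determined by the
   index i of a nonzero vector, by x^i, and by k scalars, giving at most
   (k+1) q^k |E| of them.  Over Z/p^l a tuple is bad iff its reduction mod p is
   bad over F_p, so every x^j is t x^i + p w with t in F_p and w in
   (Z/p^(l-1))^2: at most (k+1) p^(2l) (p^(2l-1))^k bad tuples.  The "in
   particular" statements follow because the size condition on E makes the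
   constant (k+1) negligible against delta |E|^(k+1). *)
From Stdlib Require Import Reals Lra.
From mathcomp Require Import all_boot all_order all_algebra.
From mathcomp Require Import zify.
Set Implicit Arguments. Unset Strict Implicit. Unset Printing Implicit Defensive.
Import GRing.Theory.
Local Open Scope ring_scope.

Section PivotCount.
Variables (T D : finType) (f : T -> D -> T) (k : nat).

Definition pivot_ffun (i : 'I_k.+1) (a : T) (d : {ffun 'I_k -> D}) :
    {ffun 'I_k.+1 -> T} :=
  [ffun j => if unlift i j is Some j' then f a (d j') else a].

Lemma leq_card_pivoted (A : {set T}) (S : {set {ffun 'I_k.+1 -> T}}) :
    (forall x, x \in S ->
       exists2 i, x i \in A & forall j, exists d, x (lift i j) = f (x i) d) ->
  (#|S| <= k.+1 * #|A| * #|D| ^ k)%N.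
Proof.
move=> pivotS.
pose param (u : 'I_k.+1 * T * {ffun 'I_k -> D}) := pivot_ffun u.1.1 u.1.2 u.2.
have sub_img : S \subset param @: setX (setX setT A) setT.
  apply/subsetP => x /pivotS[i xiA /fin_all_exists[d xd]].
  apply/imsetP; exists (i, x i, [ffun j => d j]); first by rewrite !inE xiA.
  apply/ffunP => j; rewrite !ffunE /=.
  by case: unliftP => [j' ->|->]; rewrite ?ffunE.
apply: leq_trans (subset_leq_card sub_img) _.
apply: leq_trans (leq_imset_card _ _) _.
by rewrite !cardsX !cardsT card_ord card_ffun card_ord.
Qed.

End PivotCount.

Definition pscale (R : nzRingType) (t : R) (a : R * R) : R * R := (t * a.1, t * a.2).

Lemma dotperp_eq0_pscale (K : fieldType) (a b : K * K) :
  a != (0, 0) -> dotperp a b = 0 -> exists t, b = pscale t a.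
Proof.
case: a b => [a1 a2] [b1 b2] /= a_nz /eqP; rewrite /dotperp subr_eq0 /= => /eqP e.
have [a1_0 | a1_nz] := eqVneq a1 0.
  have a2_nz : a2 != 0 by move: a_nz; rewrite a1_0; apply: contraNneq => ->.
  exists (b2 / a2); move: e; rewrite a1_0 mul0r => /esym/eqP.
  by rewrite mulf_eq0 (negbTE a2_nz) /= => /eqP ->; rewrite /pscale /= mulr0 divfK.
exists (b1 / a1); rewrite /pscale /= divfK //; congr (_, _).
by rewrite -[b2](mulKf a1_nz) e mulrAC [RHS]mulrC [a2 * b1]mulrC.
Qed.

Lemma dotperp_eq0_collinear (K : fieldType) n (v : 'I_n.+1 -> K * K) :
    (forall i j, dotperp (v i) (v j) = 0) ->
  exists i, forall j, exists t, v j = pscale t (v i).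
Proof.
move=> v_perp; case: (pickP (fun i => v i != (0, 0))) => [i vi_nz | v0].
  by exists i => j; apply: dotperp_eq0_pscale.
exists ord0 => j; exists 0.
by rewrite /pscale !mul0r; have /negbFE/eqP := v0 j.
Qed.

Lemma bad_dotperp_eq0 (K : finFieldType) k (x : {ffun 'I_k.+1 -> K * K}) :
  ~~ goodb x -> forall i j, dotperp (x i) (x j) = 0.
Proof.
move=> /goodbP x_bad i j; apply/eqP; apply: contra_notT x_bad => nz.
by exists i, j; rewrite unitfE.
Qed.

Lemma nbad_field_le (K : finFieldType) k (E : {set K * K}) :
  (nbad k E <= k.+1 * #|K| ^ k * #|E|)%N.
Proof.
rewrite mulnAC; apply: (@leq_card_pivoted _ _ (fun a t => pscale t a)) => x.
rewrite inE => /andP[/forallP xE /bad_dotperp_eq0/dotperp_eq0_collinear[i xi]].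
by exists i => // j; apply: xi.
Qed.

Lemma nbadS (R : finComUnitRingType) k (E E' : {set R * R}) :
  E \subset E' -> (nbad k E <= nbad k E')%N.
Proof.
move=> sEE'; apply: subset_leq_card; apply/subsetP => x.
rewrite !inE => /andP[/forallP xE ->]; rewrite andbT.
by apply/forallP => i; apply: subsetP sEE' _ (xE i).
Qed.

Section ReductionModP.
Variables (p l : nat).
Hypotheses (p_pr : prime p) (l_gt0 : (0 < l)%N).

Lemma Zp_pexp_gt1 : (1 < p ^ l)%N.
Proof. by rewrite -(expn0 p) ltn_exp2l ?prime_gt1. Qed.

Definition redp (a : 'Z_(p ^ l)) : 'F_p := (val a)%:R.

Lemma redp_nat m : redp m%:R = m%:R.
Proof.
rewrite /redp /= val_Zp_nat ?Zp_pexp_gt1 // -(Fp_nat_mod p_pr) modn_dvdm ?Fp_nat_mod //.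
by rewrite -{1}(expn1 p) dvdn_exp2l.
Qed.

Lemma redpD a b : redp (a + b) = redp a + redp b.
Proof. by rewrite -{1}(natr_Zp a) -{1}(natr_Zp b) -natrD redp_nat natrD. Qed.

Lemma redpM a b : redp (a * b) = redp a * redp b.
Proof. by rewrite -{1}(natr_Zp a) -{1}(natr_Zp b) -natrM redp_nat natrM. Qed.

Lemma redpB a b : redp (a - b) = redp a - redp b.
Proof. by apply/eqP; rewrite -(can_eq (addrK (redp b))) -redpD !subrK. Qed.

Lemma unit_redp a : (a \is a GRing.unit) = (redp a != 0).
Proof.
rewrite -{1}(natr_Zp a) unitZpE ?Zp_pexp_gt1 // coprime_pexpl // prime_coprime //.
by rewrite /redp (dvdn_pcharf (pchar_Fp p_pr)).
Qed.

Lemma redp_lift (y e : 'Z_(p ^ l)) (t : 'F_p) : redp y = t * redp e ->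
  exists w : 'I_(p ^ (l - 1)), y = (val t)%:R * e + (p * w)%N%:R.
Proof.
move=> yte; pose z := y - (val t)%:R * e.
have p_dvd_z : (p %| val z)%N.
  rewrite (dvdn_pcharf (pchar_Fp p_pr)); apply/eqP.
  by rewrite -/(redp z) redpB redpM redp_nat natr_Zp yte subrr.
have z_small : (val z %/ p < p ^ (l - 1))%N.
  rewrite ltn_divLR ?prime_gt0 // -expnSr subn1 prednK //.
  by apply: leq_trans (ltn_ord z) _; rewrite Zp_cast ?Zp_pexp_gt1.
exists (Ordinal z_small); rewrite /= mulnC (divnK p_dvd_z) natr_Zp.
by rewrite addrC subrK.
Qed.

Definition redp2 (v : 'Z_(p ^ l) * 'Z_(p ^ l)) : 'F_p * 'F_p := (redp v.1, redp v.2).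

Lemma bad_redp_dotperp_eq0 k (x : {ffun 'I_k.+1 -> 'Z_(p ^ l) * 'Z_(p ^ l)}) :
  ~~ goodb x -> forall i j, dotperp (redp2 (x i)) (redp2 (x j)) = 0.
Proof.
move=> /goodbP x_bad i j; apply/eqP; apply: contra_notT x_bad => nz.
by exists i, j; rewrite unit_redp /dotperp redpB !redpM.
Qed.

Lemma nbad_Zp_le k :
  (nbad k [set: 'Z_(p ^ l) * 'Z_(p ^ l)] <= k.+1 * p ^ ((2 * l - 1) * k.+1 + 1))%N.
Proof.
pose m := (p ^ (l - 1))%N.
pose f (a : 'Z_(p ^ l) * 'Z_(p ^ l)) (d : 'F_p * ('I_m * 'I_m)) :=
  ((val d.1)%:R * a.1 + (p * d.2.1)%N%:R, (val d.1)%:R * a.2 + (p * d.2.2)%N%:R).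
apply: leq_trans (@leq_card_pivoted _ _ f k setT _ _) _.
  move=> x; rewrite inE => /andP[_ /bad_redp_dotperp_eq0/dotperp_eq0_collinear[i xi]].
  exists i; rewrite ?inE // => j; have [t] := xi (lift i j).
  case: (x (lift i j)) => y1 y2 [/redp_lift[w1 ->] /redp_lift[w2 ->]].
  by exists (t, (w1, w2)).
rewrite cardsT !card_prod !card_ord (Fp_cast p_pr) Zp_cast ?Zp_pexp_gt1 //.
rewrite -mulnA leq_mul2l; apply/orP; right; apply: eq_leq.
have -> : ((2 * l - 1) * k.+1 + 1 = l + l + (1 + (l - 1) + (l - 1)) * k)%N by nia.
by rewrite expnD expnD expnM expnD expnD expn1 mulnA.
Qed.

End ReductionModP.

Section Negligibility.
Local Open Scope R_scope.

Lemma INR_muln m n : INR (m * n)%N = INR m * INR n.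
Proof. by rewrite -multE mult_INR. Qed.

Lemma INR_expn m n : INR (m ^ n)%N = INR m ^ n.
Proof. by elim: n => [|n IHn]; rewrite ?expn0 // expnS INR_muln IHn. Qed.

Lemma eventually_Rpower_ge (eps M : R) :
  0 < eps -> exists N : nat, forall x, INR N <= x -> M <= Rpower x eps.
Proof.
move=> eps_gt0; set A := Rpower (Rmax M 1) (/ eps).
have A_gt0 : 0 < A by apply: exp_pos.
have [N AN] := INR_unbounded A; exists N => x Nx.
apply: Rle_trans (Rmax_l M 1) _.
have -> : Rmax M 1 = Rpower A eps.
  by rewrite /A Rpower_mult Rinv_l ?Rpower_1 //; [have := Rmax_r M 1 | ]; lra.
apply: Rle_Rpower_l; lra.
Qed.

Lemma scaled_pow_le (K delta B y e : R) m :
  0 <= delta -> 0 <= B -> 0 <= y -> B * y <= e -> K <= delta * B ^ m ->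
  K * y ^ m <= delta * e ^ m.
Proof.
move=> delta_ge0 B_ge0 y_ge0 Bye KB.
apply: Rle_trans (Rmult_le_compat_r _ _ _ (pow_le _ m y_ge0) KB) _.
rewrite Rmult_assoc -Rpow_mult_distr; apply: Rmult_le_compat_l => //.
by apply: pow_incr; split => //; apply: Rmult_le_pos.
Qed.

Lemma eventually_scaled_pow_le (K eps c delta : R) m :
  0 < eps -> 0 < c -> 0 < delta -> (0 < m)%N ->
  exists N : nat, forall x y e, INR N <= x -> 0 <= y ->
    c * Rpower x eps * y <= e -> K * y ^ m <= delta * e ^ m.
Proof.
move=> eps_gt0 c_gt0 delta_gt0 m_gt0.
set M := Rmax 1 (K / delta).
have [N xN] := eventually_Rpower_ge (M / c) eps_gt0.
exists N => x y e Nx y_ge0 Bye; set B := c * Rpower x eps in Bye.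
have MB : M <= B.
  have -> : M = c * (M / c) by field; lra.
  by apply: Rmult_le_compat_l; [lra | apply: xN].
have B_ge1 : 1 <= B by apply: Rle_trans (Rmax_l _ _) MB.
apply: scaled_pow_le Bye _; try lra.
have -> : K = delta * (K / delta) by field; lra.
apply: Rmult_le_compat_l; first lra.
apply: Rle_trans (Rmax_r 1 (K / delta)) _; apply: Rle_trans MB _.
rewrite -[X in X <= _]pow_1.
by apply: Rle_pow => //; apply/leP.
Qed.

Lemma nbad_field_negligible k (eps c delta : R) :
  (0 < k)%N -> 0 < eps -> 0 < c -> 0 < delta ->
  exists N : nat, forall (K : finFieldType) (E : {set K * K}),
    (N <= #|K|)%N -> c * Rpower (INR #|K|) (1 + eps) <= INR #|E| ->
    INR (nbad k E) <= delta * INR #|E| ^ k.+1.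
Proof.
move=> k_gt0 eps_gt0 c_gt0 delta_gt0.
have [N small] := eventually_scaled_pow_le (INR k.+1) eps_gt0 c_gt0 delta_gt0 k_gt0.
exists N => K E NK EK; set q := INR #|K| in EK; set e := INR #|E|.
have q_gt0 : 0 < q by apply/lt_0_INR/ltP/(ltn_trans _ (card_finNzRing_gt1 K)).
have e_ge0 : 0 <= e by apply: pos_INR.
apply: Rle_trans (_ : INR k.+1 * q ^ k * e <= _).
  by rewrite -INR_expn -!INR_muln; apply/le_INR/leP/nbad_field_le.
have -> : delta * e ^ k.+1 = delta * e ^ k * e by rewrite /=; ring.
apply: Rmult_le_compat_r e_ge0 (small q q e _ _ _).
- exact/le_INR/leP.
- lra.
- by rewrite Rpower_plus Rpower_1 // in EK; rewrite Rmult_assoc [_ * q]Rmult_comm.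
Qed.

Lemma nbad_Zp_negligible k (eps c delta : R) :
  0 < eps -> 0 < c -> 0 < delta ->
  exists N : nat, forall (p l : nat) (E : {set 'Z_(p ^ l) * 'Z_(p ^ l)}),
    prime p -> (0 < l)%N -> (N <= p)%N ->
    c * Rpower (INR p) (INR (2 * l - 1) + / INR k.+1 + eps) <= INR #|E| ->
    INR (nbad k E) <= delta * INR #|E| ^ k.+1.
Proof.
move=> eps_gt0 c_gt0 delta_gt0.
have [N small] := eventually_scaled_pow_le (INR k.+1) eps_gt0 c_gt0 delta_gt0 (ltn0Sn k).
exists N => p l E p_pr l_gt0 Np EP.
set P := INR p in EP *; set a := (2 * l - 1)%N in EP *.
set T := Rpower P (/ INR k.+1) in EP.
have P_gt0 : 0 < P by apply/lt_0_INR/ltP/prime_gt0.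
have k1_gt0 : 0 < INR k.+1 by apply/lt_0_INR/ltP.
have T_pow : T ^ k.+1 = P.
  by rewrite -Rpower_pow ?Rpower_mult ?Rinv_l ?Rpower_1 //; [lra | apply: exp_pos].
apply: Rle_trans (_ : INR k.+1 * (P ^ a * T) ^ k.+1 <= _).
  rewrite Rpow_mult_distr T_pow -pow_mult -[X in _ ^ _ * X]pow_1 -pow_add.
  rewrite -INR_expn -INR_muln.
  apply/le_INR/leP/(leq_trans (nbadS k (subsetT E))).
  by rewrite plusE multE; apply: nbad_Zp_le.
apply: (small P).
- exact/le_INR/leP.
- by apply: Rmult_le_pos; [apply: pow_le; lra | apply: Rlt_le; apply: exp_pos].
- rewrite !Rpower_plus Rpower_pow // in EP.
  have -> : c * Rpower P eps * (P ^ a * T) = c * (P ^ a * T * Rpower P eps) by ring.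
  exact: EP.
Qed.

End Negligibility.

Theorem lemma2p5 (k : nat) (hk : (1 <= k)%N) :
  (* (i) bound over finite fields F_q, q = #|F| *)
  (exists C : nat, forall (F : finFieldType) (E : {set F * F}),
      (nbad k E <= C * #|F| ^ k * #|E|)%N)
  /\
  (* (i) in particular: |E| >= c q^(1+eps) implies nbad = o(|E|^(k+1)) as q -> oo *)
  (forall eps c delta : R, Rlt 0 eps -> Rlt 0 c -> Rlt 0 delta ->
     exists N : nat, forall (F : finFieldType) (E : {set F * F}),
       (N <= #|F|)%N ->
       Rle (Rmult c (Rpower (INR #|F|) (Rplus 1 eps))) (INR #|E|) ->
       Rle (INR (nbad k E)) (Rmult delta (pow (INR #|E|) k.+1)))
  /\
  (* (ii) bound over Z/p^l Z *)
  (exists C : nat, forall p l : nat, prime p -> (1 <= l)%N ->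
      (nbad k [set: 'Z_(p ^ l) * 'Z_(p ^ l)]
         <= C * p ^ ((2 * l - 1) * k.+1 + 1))%N)
  /\
  (* (ii) in particular: |E| >= c p^(2l-1+1/(k+1)+eps) implies nbad = o(|E|^(k+1)) as p -> oo *)
  (forall eps c delta : R, Rlt 0 eps -> Rlt 0 c -> Rlt 0 delta ->
     exists N : nat, forall (p l : nat) (E : {set 'Z_(p ^ l) * 'Z_(p ^ l)}),
       prime p -> (1 <= l)%N -> (N <= p)%N ->
       Rle (Rmult c (Rpower (INR p) (Rplus (Rplus (INR (2 * l - 1)) (Rinv (INR k.+1))) eps))) (INR #|E|) ->
       Rle (INR (nbad k E)) (Rmult delta (pow (INR #|E|) k.+1))).
Proof.
split; first by exists k.+1 => K E; apply: nbad_field_le.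
split; first by move=> eps c delta; exact: nbad_field_negligible hk.
split; first by exists k.+1 => p l p_pr l_gt0; exact: nbad_Zp_le.
by move=> eps c delta; exact: nbad_Zp_negligible.
Qed.
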